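(* Let $W$ be a real 2-dimensional vector space, $m\ge2$, and let $\varphi:S^mW^*\hookrightarrow(W^* )^{\otimes m}$ be the Veronese factorization structure, with (common) factorization curve $\psi:\mathbb{P}(W)\to\mathbb{P}(S^mW^* )$, $\psi(\ell)=(\ell^0)^{\otimes m}$. Let $\sigma^\vee\subset S^mW^*$ be a full-dimensional pointed convex polyhedral cone each of whose extremal rays lies on a line $\psi(t)$ for some $t\in\mathbb{P}(W)$. Then $\sigma^\vee$ is a cone over a simplicial polytope: every facet of $\sigma^\vee$ contains exactly $m$ extremal rays, and these are linearly independent.
   Context: $S^mW^*\subset(W^* )^{\otimes m}$ is the subspace of symmetric tensors (of dimension $m+1$); $\ell^0\subset W^*$ denotes the annihilator of a line $\ell\subset W$, and $(\ell^0)^{\otimes m}$ is the line spanned by $\alpha\otimes\cdots\otimes\alpha$ for $0\ne\alpha\in\ell^0$ (its image is the rational normal curve of degree $m$). A convex polyhedral cone is the set of nonnegative combinations of finitely many vectors; it is pointed if it contains no nontrivial linear subspace; an extremal ray is a 1-dimensional face, a facet a codimension-one face. *)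

From HB Require Import structures.
From mathcomp Require Import all_boot all_order all_algebra.
From mathcomp Require Import reals.
Set Implicit Arguments. Unset Strict Implicit. Unset Printing Implicit Defensive.
Import Order.TTheory GRing.Theory Num.Theory.
Local Open Scope ring_scope.

Section Cones.
Variables (R : realFieldType) (n : nat).
Notation vec := 'rV[R]_n.

Definition vset := vec -> Prop.

Definition subs (A B : vset) : Prop := forall x, A x -> B x.
Definition seteq (A B : vset) : Prop := forall x, A x <-> B x.

(* standard inner product, used to pair with linear functionals *)
Definition dotv (u x : vec) : R := \sum_(i < n) u 0 i * x 0 i.

Definition pcone (gens : seq vec) : vset :=
  fun x => exists c : 'I_(size gens) -> R,
    (forall i, 0 <= c i) /\ x = \sum_(i < size gens) c i *: gens`_i.

Definition ray (v : vec) : vset := fun x => exists c : R, 0 <= c /\ x = c *: v.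

Definition line (v : vec) : vset := fun x => exists c : R, x = c *: v.

Definition pointed (S : vset) : Prop :=
  forall v : vec, (forall t : R, S (t *: v)) -> v = 0.

Definition span_dim (S : vset) (d : nat) : Prop :=
  exists s : seq vec, [/\ size s = d, (forall x, x \in s -> S x), free s &
                          forall x, S x -> x \in <<s>>%VS].

Definition full_dim (S : vset) : Prop := span_dim S n.

Definition is_face (S F : vset) : Prop :=
  exists u : vec, (forall x, S x -> 0 <= dotv u x) /\
                  seteq F (fun x => S x /\ dotv u x = 0).

Definition is_facet (S F : vset) : Prop :=
  is_face S F /\ exists d, span_dim S d.+1 /\ span_dim F d.

Definition is_extremal_ray (S E : vset) : Prop := is_face S E /\ span_dim E 1.

End Cones.

(* Veronese structure for W = R^2.  A point t of P(W) is represented by a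
   nonzero w in W; its annihilator l^0 in W^* is spanned by alpha = (-w_1, w_0).
   S^m W^* is identified with R^(m+1): a symmetric tensor T is sent to the
   vector whose k-th coordinate is the entry of T at the multi-index
   (0,...,0,1,...,1) with k ones (by symmetry this determines T).  Under this
   identification alpha^{(x) m} has coordinates a^(m-k) b^k. *)
Definition annih (R : ringType) (w : 'rV[R]_2) : 'rV[R]_2 :=
  \row_(j < 2) (if j == 0 :> nat then - w 0 1 else w 0 0).

Definition psi (R : ringType) (m : nat) (w : 'rV[R]_2) : 'rV[R]_(m.+1) :=
  let a := annih w 0 0 in let b := annih w 0 1 in
  \row_(k < m.+1) (a ^+ (m - k) * b ^+ k).

From mathcomp Require Import all_boot all_order all_algebra.
From mathcomp Require Import reals.
From Stdlib Require Import Classical.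
From mathcomp Require Import ring zify.
Import Order.TTheory GRing.Theory Num.Theory.
Local Open Scope ring_scope.
Set Implicit Arguments. Unset Strict Implicit. Unset Printing Implicit Defensive.

(** Let [u] expose the facet [F] and let [M] be an irredundant list of
    generators of [F]: no member is a nonnegative combination of the others.
    Each member of [M] spans an extremal ray of the whole cone: Farkas' lemma
    gives a functional exposing it inside [F], and adding a large multiple of
    [u] extends that functional to the cone.  Hence the members of [M] lie on
    the rational normal curve, and pointedness makes them pairwise
    non-proportional.  Any [m + 1] distinct points of that curve are linearly
    independent (some form of degree [m] vanishes at [m] of them but not at the
    last one), while [F] spans only [m] dimensions, so [M] is a basis of the
    span of [F].  Finally every extremal ray inside [F] is spanned by a member
    of [M]. *)

(** * Polyhedral cones *)

Section Cones.
Variables (R : realFieldType) (n : nat).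
Notation vec := 'rV[R]_n.

Lemma dotvDr (u x y : vec) : dotv u (x + y) = dotv u x + dotv u y.
Proof. by rewrite /dotv -big_split /=; apply: eq_bigr => i _; rewrite mxE mulrDr. Qed.

Lemma dotvDl (u v x : vec) : dotv (u + v) x = dotv u x + dotv v x.
Proof. by rewrite /dotv -big_split /=; apply: eq_bigr => i _; rewrite mxE mulrDl. Qed.

Lemma dotvZr (u x : vec) c : dotv u (c *: x) = c * dotv u x.
Proof. by rewrite /dotv mulr_sumr; apply: eq_bigr => i _; rewrite mxE mulrCA. Qed.

Lemma dotvZl (u x : vec) c : dotv (c *: u) x = c * dotv u x.
Proof. by rewrite /dotv mulr_sumr; apply: eq_bigr => i _; rewrite mxE mulrA. Qed.

Lemma dotv0r (u : vec) : dotv u 0 = 0.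
Proof. by rewrite -(scale0r (0 : vec)) dotvZr mul0r. Qed.

Lemma dotv0l (x : vec) : dotv 0 x = 0.
Proof. by rewrite -(scale0r (0 : vec)) dotvZl mul0r. Qed.

Lemma dotvNr (u x : vec) : dotv u (- x) = - dotv u x.
Proof. by rewrite -scaleN1r dotvZr mulN1r. Qed.

Lemma dotvNl (u x : vec) : dotv (- u) x = - dotv u x.
Proof. by rewrite -scaleN1r dotvZl mulN1r. Qed.

Lemma dotv_self_gt0 (x : vec) : x != 0 -> 0 < dotv x x.
Proof.
move=> x0; have sq_ge0 i : 0 <= x 0 i * x 0 i by rewrite -expr2 sqr_ge0.
rewrite lt0r sumr_ge0 // andbT psumr_neq0 //; apply: contraNT x0.
move=> /hasPn x_eq0; apply/eqP/rowP => i; rewrite mxE; apply/eqP.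
by rewrite -sqrf_eq0 expr2 eq_le sq_ge0 andbT leNgt; exact: x_eq0 (mem_index_enum i).
Qed.

Lemma pcone_nil (x : vec) : pcone [::] x <-> x = 0.
Proof.
split; first by case=> c [_ ->]; rewrite big_ord0.
by move=> ->; exists (fun _ => 0); split=> //; rewrite big_ord0.
Qed.

Lemma pcone_cons (a : vec) L x :
  pcone (a :: L) x <-> exists t y, [/\ 0 <= t, pcone L y & x = t *: a + y].
Proof.
split.
  case=> c [c0 ->]; exists (c ord0), (\sum_(i < size L) c (lift ord0 i) *: L`_i).
  split => //; last by rewrite big_ord_recl.
  by exists (fun i => c (lift ord0 i)); split.
case=> t [y [t0 [c [c0 ->]] ->]].
exists (fun i : 'I_(size L).+1 => if unlift ord0 i is Some j then c j else t).
split; first by move=> i; case: (unlift ord0 i).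
rewrite big_ord_recl /= unlift_none; congr (_ + _).
by apply: eq_bigr => i _; rewrite liftK.
Qed.

Lemma pcone0 L : pcone L (0 : vec).
Proof.
elim: L => [|a L IH]; first exact/pcone_nil.
by apply/pcone_cons; exists 0, 0; rewrite scale0r addr0.
Qed.

Lemma pconeD L (x y : vec) : pcone L x -> pcone L y -> pcone L (x + y).
Proof.
elim: L x y => [|a L IH] x y.
  by move=> /pcone_nil -> /pcone_nil ->; apply/pcone_nil; rewrite addr0.
move=> /pcone_cons [t [x' [t0 hx ->]]] /pcone_cons [s [y' [s0 hy ->]]].
apply/pcone_cons; exists (t + s), (x' + y'); split; [exact: addr_ge0|exact: IH|].
by rewrite scalerDl -!addrA; congr (_ + _); rewrite addrCA.
Qed.

Lemma pconeZ L (x : vec) t : 0 <= t -> pcone L x -> pcone L (t *: x).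
Proof.
move=> t0; elim: L x => [|a L IH] x.
  by move=> /pcone_nil ->; apply/pcone_nil; rewrite scaler0.
move=> /pcone_cons [s [y [s0 hy ->]]].
apply/pcone_cons; exists (t * s), (t *: y); split; [exact: mulr_ge0|exact: IH|].
by rewrite scalerDr scalerA.
Qed.

Lemma pcone_mem L (a : vec) : a \in L -> pcone L a.
Proof.
elim: L => [//|b L IH]; rewrite inE => /predU1P [->|/IH h]; apply/pcone_cons.
  by exists 1, 0; rewrite scale1r addr0; split=> //; exact: pcone0.
by exists 0, a; rewrite scale0r add0r.
Qed.

Lemma pcone_sub L L' (x : vec) :
  (forall a, a \in L -> pcone L' a) -> pcone L x -> pcone L' x.
Proof.
elim: L x => [|a L IH] x hL; first by move=> /pcone_nil ->; exact: pcone0.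
move=> /pcone_cons [t [y [t0 hy ->]]]; apply: pconeD.
  by apply: pconeZ => //; apply: hL; rewrite mem_head.
by apply: IH => // b hb; apply: hL; rewrite inE hb orbT.
Qed.

Lemma pcone_dot_ge0 L (u x : vec) :
  (forall a, a \in L -> 0 <= dotv u a) -> pcone L x -> 0 <= dotv u x.
Proof.
elim: L x => [|a L IH] x hL; first by move=> /pcone_nil ->; rewrite dotv0r.
move=> /pcone_cons [t [y [t0 hy ->]]]; rewrite dotvDr dotvZr addr_ge0 //.
  by rewrite mulr_ge0 // hL // mem_head.
by apply: IH => // b hb; apply: hL; rewrite inE hb orbT.
Qed.

Lemma pcone_dot0 L (u x : vec) :
  (forall a, a \in L -> dotv u a = 0) -> pcone L x -> dotv u x = 0.
Proof.
elim: L x => [|a L IH] x hL; first by move=> /pcone_nil ->; rewrite dotv0r.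
move=> /pcone_cons [t [y [t0 hy ->]]].
rewrite dotvDr dotvZr hL ?mem_head // mulr0 add0r.
by apply: IH hy => g hg; apply: hL; rewrite inE hg orbT.
Qed.

Lemma pcone_span L (x : vec) : pcone L x -> x \in <<L>>%VS.
Proof.
elim: L x => [|a L IH] x; first by move=> /pcone_nil ->; rewrite mem0v.
move=> /pcone_cons [t [y [t0 hy ->]]]; rewrite span_cons.
by apply: memv_add; [apply: memvZ; exact: memv_line|exact: IH].
Qed.

Lemma pcone_map (f : vec -> vec) L x :
  f 0 = 0 -> (forall u v, f (u + v) = f u + f v) -> (forall c u, f (c *: u) = c *: f u) ->
  pcone (map f L) x -> exists2 x0, pcone L x0 & x = f x0.
Proof.
move=> f0 fD fZ; elim: L x => [|a L IH] x /=.
  by move=> /pcone_nil ->; exists 0 => //; exact: pcone0.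
move=> /pcone_cons [t [y [t0 /IH [y0 hy0 ->] ->]]].
by exists (t *: a + y0); [apply/pcone_cons; exists t, y0|rewrite fD fZ].
Qed.

Lemma pcone_filter0 (v : vec) L x : (forall g, g \in L -> 0 <= dotv v g) ->
  pcone L x -> dotv v x = 0 -> pcone [seq g <- L | dotv v g == 0] x.
Proof.
elim: L x => [|a L IH] x hL //=.
have hL' g : g \in L -> 0 <= dotv v g by move=> hg; apply: hL; rewrite inE hg orbT.
have ha : 0 <= dotv v a by apply: hL; rewrite mem_head.
move=> /pcone_cons [t [y [t0 hy ->]]]; rewrite dotvDr dotvZr => /eqP.
rewrite paddr_eq0 ?mulr_ge0 ?(pcone_dot_ge0 hL' hy) // => /andP [/eqP ta0 /eqP vy0].
case: eqP => [_|/eqP va0]; first by apply/pcone_cons; exists t, y; split=> //; exact: IH.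
move: ta0 => /eqP; rewrite mulf_eq0 (negbTE va0) orbF => /eqP ->.
by rewrite scale0r add0r; exact: IH.
Qed.

Lemma pcone_pos0 (v : vec) L x : (forall g, g \in L -> 0 < dotv v g) ->
  pcone L x -> dotv v x = 0 -> x = 0.
Proof.
move=> hL hx hv; have := pcone_filter0 (fun g hg => ltW (hL g hg)) hx hv.
suff -> : [seq g <- L | dotv v g == 0] = [::] by move/pcone_nil.
apply/eqP; rewrite -[_ == _]negbK -has_filter; apply/hasPn => g /hL.
by rewrite lt0r => /andP [].
Qed.

(** * Farkas' lemma *)

(* Fourier-Motzkin elimination of the generator [a]: [dotv y (fm_proj y a v) = 0]. *)
Definition fm_proj (y a v : vec) : vec := dotv y a *: v - dotv y v *: a.

Lemma dotv_fm_proj (y y' a v : vec) :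
  dotv (dotv y a *: y' - dotv y' a *: y) v = dotv y' (fm_proj y a v).
Proof.
rewrite /fm_proj dotvDl dotvNl !dotvZl dotvDr dotvNr !dotvZr.
by rewrite [dotv y' a * _]mulrC.
Qed.

Lemma fm_proj_pcone (y a : vec) L b : dotv y a < 0 -> dotv y b <= 0 ->
  (forall g, g \in L -> 0 <= dotv y g) ->
  pcone (map (fm_proj y a) L) (fm_proj y a b) -> pcone (a :: L) b.
Proof.
move=> ya yb hL /pcone_map [].
- by rewrite /fm_proj scaler0 dotv0r scale0r subr0.
- by move=> u v; rewrite /fm_proj dotvDr scalerDr scalerDl opprD addrACA.
- by move=> c u; rewrite /fm_proj dotvZr scalerBr !scalerA mulrC.
move=> x hx; rewrite /fm_proj => /(congr1 (fun v => (dotv y a)^-1 *: (v + dotv y b *: a))).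
have ya0 : dotv y a != 0 by rewrite ltr0_neq0.
rewrite subrK scalerA mulVf // scale1r => ->; apply/pcone_cons.
exists ((dotv y b - dotv y x) / dotv y a), x; split => //.
  rewrite ler_ndivlMr // mul0r subr_le0 (le_trans yb) //.
  exact: pcone_dot_ge0 hx.
rewrite -addrA [- _ + _]addrC -scalerBl scalerDr !scalerA mulVf // scale1r.
by rewrite addrC mulrC.
Qed.

Lemma farkas (L : seq vec) b :
  pcone L b \/ exists y, (forall a, a \in L -> 0 <= dotv y a) /\ dotv y b < 0.
Proof.
move: {2}(size L) (erefl (size L)) => k; elim: k L b => [|k IH] [|a L] b //= => [_|[sL]].
  have [->|b0] := eqVneq b 0; first by left; exact: pcone0.
  by right; exists (- b); split=> //; rewrite dotvNl oppr_lt0 dotv_self_gt0.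
have [hb|[y [hy yb]]] := IH L b sL.
  by left; apply/pcone_cons; exists 0, b; rewrite scale0r add0r.
have [ya|ya] := lerP 0 (dotv y a).
  by right; exists y; split=> // g; rewrite inE => /predU1P [->|/hy].
have [hfb|[y' [hy' y'b]]] :=
  IH (map (fm_proj y a) L) (fm_proj y a b) (etrans (size_map _ L) sL).
  by left; exact: fm_proj_pcone ya (ltW yb) hy hfb.
right; exists (dotv y a *: y' - dotv y' a *: y); split; last by rewrite dotv_fm_proj.
move=> g; rewrite dotv_fm_proj inE => /predU1P [->|gL]; last exact/hy'/map_f.
by rewrite /fm_proj subrr dotv0r.
Qed.

(** * Faces and extremal rays *)

Lemma pointed_subs (A B : vset R n) : subs B A -> pointed A -> pointed B.
Proof. by move=> BA hA v hv; apply: hA => t; exact/BA/hv. Qed.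

Lemma pointed_opp L (b : vec) :
  pointed (pcone L) -> pcone L b -> pcone L (- b) -> b = 0.
Proof.
move=> hp hb hnb; apply: hp => t; have [t0|t0] := lerP 0 t; first exact: pconeZ.
have -> : t *: b = (- t) *: (- b) by rewrite scaleNr scalerN opprK.
by apply: pconeZ => //; rewrite oppr_ge0 ltW.
Qed.

Lemma pointed_scale_ge0 L (g x : vec) lam : pointed (pcone L) ->
  g != 0 -> pcone L g -> pcone L x -> x = lam *: g -> 0 <= lam.
Proof.
move=> hp g0 hg hx ex; rewrite leNgt; apply/negP => lam0; move/eqP: g0; apply.
apply: pointed_opp hp hg _; have -> : - g = (- lam)^-1 *: x.
  by rewrite ex scalerA invrN mulNr mulVf ?ltr0_neq0 // scaleN1r.
by apply: pconeZ hx; rewrite invr_ge0 oppr_ge0 ltW.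
Qed.

Lemma span_dim_le (A : vset R n) (s : seq vec) d :
  free s -> (forall x, x \in s -> A x) -> span_dim A d -> (size s <= d)%N.
Proof.
move=> fs sA [t [st _ _ tsp]]; rewrite -(eqP fs) -st.
apply: leq_trans (dim_span t); apply: dimvS.
by apply/span_subvP => x /sA /tsp.
Qed.

Lemma span_dim_uniq (A : vset R n) d1 d2 : span_dim A d1 -> span_dim A d2 -> d1 = d2.
Proof.
move=> h1 h2; have [s1 [e1 s1A f1 _]] := h1; have [s2 [e2 s2A f2 _]] := h2.
apply/eqP; rewrite eqn_leq; apply/andP; split.
  by rewrite -e1; exact: span_dim_le f1 s1A h2.
by rewrite -e2; exact: span_dim_le f2 s2A h1.
Qed.

Lemma span_dim_seteq (A B : vset R n) d : seteq A B -> span_dim A d -> span_dim B d.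
Proof. by move=> AB [s [sd sA fs As]]; exists s; split=> // x; rewrite -AB; auto. Qed.

Lemma span_dim_ray (a : vec) : a != 0 -> span_dim (ray a) 1.
Proof.
move=> a0; exists [:: a]; split; rewrite ?seq1_free //.
  by move=> x; rewrite inE => /eqP ->; exists 1; rewrite scale1r.
by move=> x [c [_ ->]]; rewrite span_seq1 memvZ ?memv_line.
Qed.

Lemma span_dim1_line (E : vset R n) : span_dim E 1 ->
  exists e, [/\ e != 0, E e & forall x, E x -> exists c, x = c *: e].
Proof.
case=> s [s1 sE fe Es]; case: s s1 sE fe Es => [|e []] // _ sE fe Es.
exists e; split; [by rewrite -seq1_free|by apply: sE; rewrite mem_head|].
by move=> x /Es; rewrite span_seq1 => /vlineP.
Qed.

Lemma extremal_ray_of_gens (gens L : seq vec) E : pointed (pcone gens) ->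
  (forall a, a \in L -> a != 0 /\ pcone gens a) ->
  is_extremal_ray (pcone gens) E -> (forall x, E x -> pcone L x) ->
  exists2 a, a \in L & seteq E (ray a).
Proof.
move=> hpt hL [[v [hv hE]] /span_dim1_line [e [e0 eE Ee]]] EL.
have [eS ve] := (hE e).1 eE.
have hvL g : g \in L -> 0 <= dotv v g by move=> /hL [_]; exact: hv.
have /hasP [g gL /eqP vg] : has (fun g => dotv v g == 0) L.
  rewrite has_filter; apply: contraNneq e0 => L0.
  by move: (pcone_filter0 hvL (EL _ eE) ve); rewrite L0 => /pcone_nil ->.
have [g0 gS] := hL g gL; have [c ec] := Ee g (proj2 (hE g) (conj gS vg)).
have c0 : c != 0 by apply: contraNneq g0 => c0; rewrite ec c0 scale0r.
exists g => // x; split=> [xE|[t [t0 ->]]]; last first.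
  by apply/hE; rewrite dotvZr vg mulr0; split=> //; exact: pconeZ.
have [c' ec'] := Ee x xE; have xg : x = (c' / c) *: g by rewrite ec scalerA divfK.
exists (c' / c); split=> //; apply: pointed_scale_ge0 hpt g0 gS _ xg.
by have [] := (hE x).1 xE.
Qed.

Lemma pos_shift_exists (T : eqType) (s : seq T) (p q : T -> R) :
  exists lam, forall x, x \in s -> 0 < q x -> 0 < p x + lam * q x.
Proof.
elim: s => [|a s [lam hlam]]; first by exists 0.
exists (Num.max lam (1 - p a / q a)) => x; rewrite inE => /predU1P [-> qa|xs qx].
  apply: (lt_le_trans qa); rewrite -lerBlDl.
  have -> : q a - p a = (1 - p a / q a) * q a by rewrite mulrBl mul1r divfK ?lt0r_neq0.
  by rewrite ler_pM2r // le_max lexx orbT.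
apply: lt_le_trans (hlam x xs qx) _.
by rewrite lerD2l ler_pM2r // le_max lexx.
Qed.

Lemma face_of_face (gens : seq vec) (u w : vec) :
  (forall x, pcone gens x -> 0 <= dotv u x) ->
  (forall x, pcone gens x -> dotv u x = 0 -> 0 <= dotv w x) ->
  exists W, (forall x, pcone gens x -> 0 <= dotv W x) /\
    forall x, pcone gens x -> dotv W x = 0 <-> dotv u x = 0 /\ dotv w x = 0.
Proof.
move=> hu hw; have [lam hlam] := pos_shift_exists gens (dotv w) (dotv u).
pose W := w + lam *: u.
have dotvW x : dotv W x = dotv w x + lam * dotv u x by rewrite dotvDl dotvZl.
have hW g : g \in gens -> 0 <= dotv W g /\ (dotv u g != 0 -> 0 < dotv W g).
  move=> gg; have gS := pcone_mem gg; rewrite dotvW.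
  have [ug0|ug0] := eqVneq (dotv u g) 0; first by rewrite ug0 mulr0 addr0 hw.
  have ug : 0 < dotv u g by rewrite lt0r ug0 hu.
  by split=> [|_]; [apply/ltW|]; exact: hlam.
exists W; split=> [x|x xS]; first by apply: pcone_dot_ge0 => g /hW [].
split=> [Wx|[ux wx]]; last by rewrite dotvW ux wx mulr0 addr0.
have ux : dotv u x = 0.
  apply: (pcone_dot0 _ (pcone_filter0 (fun g gg => (hW g gg).1) xS Wx)) => g.
  rewrite mem_filter => /andP [/eqP Wg /hW [_ hg]].
  by have [//|/hg] := eqVneq (dotv u g) 0; rewrite Wg ltxx.
by move: Wx; rewrite dotvW ux mulr0 addr0.
Qed.

(** * Irredundant generators *)

Definition irredundant (M : seq vec) := forall a, a \in M -> ~ pcone (rem a M) a.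

Lemma irredundant_neq0 M a : irredundant M -> a \in M -> a != 0.
Proof. by move=> hM aM; apply/eqP => a0; apply: (hM _ aM); rewrite a0; exact: pcone0. Qed.

Lemma irredundant_uniq M : irredundant M -> uniq M.
Proof.
move=> hM; apply: count_mem_uniq => x; have [xM|/count_memPn //] := boolP (x \in M).
have : x \notin rem x M by apply/negP => /pcone_mem; exact: hM.
have : (0 < count_mem x M)%N by rewrite lt0n; apply: contraL xM => /eqP/count_memPn.
move=> pos /count_memPn; rewrite count_mem_rem eqxx /= => /eqP; rewrite subn_eq0.
by move=> le1; apply/eqP; rewrite eqn_leq le1.
Qed.

Lemma irredundant_subseq (L : seq vec) :
  exists M, [/\ {subset M <= L}, (forall a, a \in L -> pcone M a) & irredundant M].
Proof.
have [k] := ubnP (size L); elim: k L => // k IH L sL.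
have [[a [aL ha]]|h] := classic (exists a, a \in L /\ pcone (rem a L) a).
  have [|M [ML LM hM]] := IH (rem a L).
    have L0 : (0 < size L)%N by case: (L) aL.
    by rewrite size_rem // -ltnS prednK.
  exists M; split=> // [b /ML /mem_rem //|b bL].
  have [->|ba] := eqVneq b a; last by apply: LM; rewrite rem_mem.
  exact: pcone_sub ha.
by exists L; split=> // [a /pcone_mem //|a aL ha]; apply: h; exists a.
Qed.

Lemma face_irredundant_gens (gens : seq vec) u :
  (forall x, pcone gens x -> 0 <= dotv u x) ->
  exists M, irredundant M /\ forall x, pcone M x <-> pcone gens x /\ dotv u x = 0.
Proof.
move=> hu; pose L0 := [seq g <- gens | dotv u g == 0].
have [M [ML0 L0M irrM]] := irredundant_subseq L0.
have L0gens g : g \in L0 -> pcone gens g /\ dotv u g = 0.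
  by rewrite mem_filter => /andP [/eqP ug /pcone_mem].
exists M; split=> // x; split=> [xM|[xS ux]].
  split; first by apply: pcone_sub xM => g /ML0 /L0gens [].
  by apply: pcone_dot0 xM => g /ML0 /L0gens [].
apply: (pcone_sub L0M); apply: pcone_filter0 xS ux => g gg; exact/hu/pcone_mem.
Qed.

Section Irredundant.
Variables (M : seq vec) (a : vec).
Hypotheses (hpt : pointed (pcone M)) (hM : irredundant M) (aM : a \in M).

(* A Farkas certificate for [- b] over [[:: a, - a & rem a M]] is the separator;
   a representation of [- b] would make [a] redundant or contradict pointedness. *)
Lemma irredundant_separator_at b : b \in rem a M -> exists y,
  [/\ dotv y a = 0, (forall c, c \in rem a M -> 0 <= dotv y c) & 0 < dotv y b].
Proof.
move=> bM; have [|[y [hy yb]]] := farkas [:: a, - a & rem a M] (- b); last first.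
  have ya : 0 <= dotv y a by apply: hy; rewrite mem_head.
  have yna : 0 <= dotv y (- a) by apply: hy; rewrite !inE eqxx orbT.
  exists y; split=> [|c cM|]; last by rewrite -oppr_lt0 -dotvNr.
    by apply/eqP; rewrite eq_le ya -oppr_ge0 -dotvNr yna.
  by apply: hy; rewrite !inE cM !orbT.
move=> /pcone_cons [t [x [t0 /pcone_cons [s [z [s0 hz ->]]] hb]]]; exfalso.
have remM c : pcone (rem a M) c -> pcone M c.
  by apply: pcone_sub => d /mem_rem; exact: pcone_mem.
have bz : pcone (rem a M) b by exact: pcone_mem.
have [ts|ts] := lerP 0 (t - s).
  have := irredundant_neq0 hM (mem_rem bM).
  rewrite (pointed_opp hpt (remM _ bz)) ?eqxx //.
  rewrite hb scalerN addrA -scalerBl.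
  by apply: pconeD (remM _ hz); exact: pconeZ ts (pcone_mem aM).
have ea : a = (s - t)^-1 *: (b + z).
  rewrite -[b]opprK hb !opprD scalerN opprK addrA addrNK addrC -scalerBl.
  by rewrite scalerA mulVf ?scale1r // subr_eq0 gt_eqF // -subr_lt0.
apply: (hM aM); rewrite [X in pcone _ X]ea.
by apply: pconeZ _ (pconeD bz hz); rewrite invr_ge0 subr_ge0 ltW // -subr_lt0.
Qed.

Lemma irredundant_separator :
  exists w, dotv w a = 0 /\ forall b, b \in rem a M -> 0 < dotv w b.
Proof.
have sep (K : seq vec) : {subset K <= rem a M} -> exists w, [/\ dotv w a = 0,
    forall c, c \in rem a M -> 0 <= dotv w c & forall b, b \in K -> 0 < dotv w b].
  elim: K => [_|b K IH KM].
    by exists 0; split=> [|c _|//]; rewrite dotv0l.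
  have [|w [wa wc wb]] := IH; first by move=> c cK; apply: KM; rewrite inE cK orbT.
  have [y [ya yc yb]] := irredundant_separator_at (KM b (mem_head b K)).
  exists (w + y); split=> [|c cM|c]; rewrite dotvDl.
  - by rewrite wa ya addr0.
  - by rewrite addr_ge0 ?wc ?yc.
  rewrite inE => /predU1P [->|cK]; first by rewrite ltr_wpDl ?wc ?KM ?mem_head.
  by rewrite ltr_wpDr ?wb ?yc ?KM // inE cK orbT.
by have [w [wa _ wb]] := sep _ (fun c cM => cM); exists w.
Qed.

Lemma irredundant_ray_exposed : exists w, (forall x, pcone M x -> 0 <= dotv w x) /\
  forall x, pcone M x /\ dotv w x = 0 <-> ray a x.
Proof.
have [w [wa wpos]] := irredundant_separator.
have wM c : c \in M -> 0 <= dotv w c.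
  by have [->|ca cM] := eqVneq c a; [rewrite wa|rewrite ltW ?wpos ?rem_mem].
exists w; split=> [x|x]; first exact: pcone_dot_ge0.
split=> [[xM wx]|[t [t0 ->]]]; last first.
  by rewrite dotvZr wa mulr0; split=> //; exact: pconeZ t0 (pcone_mem aM).
have /pcone_cons [t [z [t0 hz ex]]] : pcone (a :: rem a M) x.
  by apply: pcone_sub xM => c cM; apply: pcone_mem; rewrite -(perm_mem (perm_to_rem aM)).
move: wx; rewrite ex dotvDr dotvZr wa mulr0 add0r => /(pcone_pos0 wpos hz) z0.
by exists t; rewrite z0 addr0.
Qed.

End Irredundant.

Lemma irredundant_not_parallel (M : seq vec) a b lam :
  pointed (pcone M) -> irredundant M -> a \in M -> b \in M -> a != b -> a <> lam *: b.
Proof.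
move=> hpt hM aM bM ab ea.
have lam0 := pointed_scale_ge0 hpt (irredundant_neq0 hM bM) (pcone_mem bM) (pcone_mem aM) ea.
apply: (hM a aM); rewrite [X in pcone _ X]ea; apply: pconeZ lam0 (pcone_mem _).
by rewrite rem_mem // eq_sym.
Qed.

End Cones.

Section Face.
Variables (R : realFieldType) (n : nat) (gens M : seq 'rV[R]_n) (u : 'rV[R]_n).
Hypotheses (hpt : pointed (pcone gens)) (hu : forall x, pcone gens x -> 0 <= dotv u x).
Hypotheses (hM : forall x, pcone M x <-> pcone gens x /\ dotv u x = 0) (hirr : irredundant M).

Lemma pointed_irredundant : pointed (pcone M).
Proof. by apply: pointed_subs hpt => x /hM []. Qed.

Lemma extremal_ray_irredundant a : a \in M -> is_extremal_ray (pcone gens) (ray a).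
Proof.
move=> aM; split; last exact/span_dim_ray/(irredundant_neq0 hirr aM).
have [w [hw wray]] := irredundant_ray_exposed pointed_irredundant hirr aM.
have [W [hW Wface]] := face_of_face hu (fun x xS ux => hw x (proj2 (hM x) (conj xS ux))).
exists W; split=> // x; split=> [/wray [/hM [xS ux] wx]|[xS Wx]].
  by split=> //; apply/(Wface x xS).
have [ux wx] := (Wface x xS).1 Wx; exact/wray/(conj (proj2 (hM x) (conj xS ux)) wx).
Qed.

End Face.

(** * The rational normal curve *)

Section Veronese.
Variable R : realFieldType.
Implicit Types (p r : 'rV[R]_2) (q : {poly R}).

(* [psi m w] is [veronese m (annih w)] by definition. *)
Definition veronese m p : 'rV[R]_m.+1 := \row_(k < m.+1) (p 0 0 ^+ (m - k) * p 0 1 ^+ k).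

Lemma veroneseZ m (mu : R) p : veronese m (mu *: p) = mu ^+ m *: veronese m p.
Proof.
apply/rowP => k; rewrite !mxE !exprMn.
have km : (k <= m)%N by rewrite -ltnS.
by rewrite -[X in mu ^+ X](subnK km) exprD; ring.
Qed.

Lemma row2_eq p p' : p 0 0 = p' 0 0 -> p 0 1 = p' 0 1 -> p = p'.
Proof.
move=> e0 e1; apply/rowP => -[[|[|//]] i2].
  by rewrite (_ : Ordinal i2 = 0) //; exact: val_inj.
by rewrite (_ : Ordinal i2 = 1) //; exact: val_inj.
Qed.

Lemma dotv2 r p : dotv r p = r 0 0 * p 0 0 + r 0 1 * p 0 1.
Proof.
rewrite /dotv !big_ord_recl big_ord0 addr0.
by congr (r 0 _ * p 0 _ + r 0 _ * p 0 _); apply: val_inj.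
Qed.

Lemma dotv_annih p p' : dotv (annih p) p' = p 0 0 * p' 0 1 - p 0 1 * p' 0 0.
Proof. by rewrite dotv2 !mxE /= addrC mulNr. Qed.

Lemma dotv_annih_self p : dotv (annih p) (annih p) = dotv p p.
Proof. by rewrite !dotv2 !mxE /=; ring. Qed.

Lemma annih_neq0 p : p != 0 -> annih p != 0.
Proof.
move=> p0; apply: contraTneq (dotv_self_gt0 p0) => ap0.
by rewrite -dotv_annih_self ap0 dotv0l ltxx.
Qed.

Lemma dotv_annih_eq0 p p' : p != 0 -> dotv (annih p) p' = 0 -> exists mu, p' = mu *: p.
Proof.
rewrite dotv_annih => p0 /eqP; rewrite subr_eq0 => /eqP e.
have [p00|p00] := eqVneq (p 0 0) 0.
  have p01 : p 0 1 != 0 by apply: contraNneq p0 => p01; apply/eqP/row2_eq; rewrite mxE.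
  exists (p' 0 1 / p 0 1); apply: row2_eq; rewrite mxE ?divfK // p00 mulr0.
  by apply: (mulfI p01); rewrite mulr0 -e p00 mul0r.
exists (p' 0 0 / p 0 0); apply: row2_eq; rewrite mxE ?divfK //.
by apply: (mulfI p00); rewrite e; field.
Qed.

(* [q] encodes the binary form [\sum_k q_k X^(d-k) Y^k] of degree [d]. *)
Definition hom_eval d q p := \sum_(k < d.+1) q`_k * (p 0 0 ^+ (d - k) * p 0 1 ^+ k).

Lemma hom_evalS d q p : (size q <= d.+1)%N -> hom_eval d.+1 q p = p 0 0 * hom_eval d q p.
Proof.
move=> sq; rewrite /hom_eval big_ord_recr /= (nth_default 0 sq) mul0r addr0 mulr_sumr.
apply: eq_bigr => i _; rewrite subSn; last by rewrite -ltnS.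
by rewrite exprS; ring.
Qed.

Lemma hom_evalX d q p : hom_eval d.+1 ('X * q) p = p 0 1 * hom_eval d q p.
Proof.
rewrite /hom_eval big_ord_recl /= coefXM eqxx mul0r add0r mulr_sumr.
by apply: eq_bigr => i _; rewrite coefXM /= subSS exprS; ring.
Qed.

Lemma hom_evalD d q q' p : hom_eval d (q + q') p = hom_eval d q p + hom_eval d q' p.
Proof. by rewrite /hom_eval -big_split; apply: eq_bigr => i _; rewrite coefD mulrDl. Qed.

Lemma hom_evalZ d (c : R) q p : hom_eval d (c *: q) p = c * hom_eval d q p.
Proof. by rewrite /hom_eval mulr_sumr; apply: eq_bigr => i _; rewrite coefZ -mulrA. Qed.

Definition coefrow d q : 'rV[R]_d.+1 := \row_(k < d.+1) q`_k.

Lemma dotv_coefrow_veronese d q p : dotv (coefrow d q) (veronese d p) = hom_eval d q p.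
Proof. by apply: eq_bigr => k _; rewrite !mxE. Qed.

(* Multiplying a form by [X] keeps [q] and raises [d]; multiplying by [Y] also
   multiplies [q] by ['X]. *)
Definition linprod (fs : seq 'rV[R]_2) : {poly R} :=
  foldr (fun r q => r 0 0 *: q + r 0 1 *: ('X * q)) 1 fs.

Lemma linprodE fs p : (size (linprod fs) <= (size fs).+1)%N /\
  hom_eval (size fs) (linprod fs) p = \prod_(r <- fs) dotv r p.
Proof.
elim: fs => [|r fs [IHs IHe]] /=.
  by rewrite big_nil size_poly1 /hom_eval big_ord1 coefC /= !mulr1.
split; last by rewrite big_cons hom_evalD !hom_evalZ hom_evalS // hom_evalX IHe dotv2; ring.
rewrite (leq_trans (size_polyD _ _)) // geq_max !(leq_trans (size_scale_leq _ _)) //.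
  by rewrite (leq_trans (size_polyMleq _ _)) // size_polyX add2n /= ltnS.
exact: leq_trans IHs _.
Qed.

Lemma veronese_annihilator m k (p : 'I_k -> 'rV[R]_2) j : (k <= m.+1)%N -> p j != 0 ->
  (forall i, i != j -> dotv (annih (p i)) (p j) != 0) ->
  exists q, hom_eval m q (p j) != 0 /\ forall i, i != j -> hom_eval m q (p i) = 0.
Proof.
move=> km pj0 hj.
(* One factor [dotv (annih (p i))] for each [i != j] kills [p i]; the remaining
   degree is filled with [dotv (p j)], which is positive at [p j]. *)
pose fs := [seq annih (p i) | i <- enum 'I_k & i != j] ++ nseq (m.+1 - k) (p j).
have sfs : size fs = m.
  have := count_predC (pred1 j) (enum 'I_k).
  rewrite size_enum_ord (count_uniq_mem _ (enum_uniq _)) mem_enum /=.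
  rewrite size_cat size_nseq size_map size_filter.
  move: km; set c := count _ _; lia.
exists (linprod fs); rewrite -{1 2}sfs; split=> [|i ij]; rewrite (linprodE fs _).2.
  rewrite prodf_seq_neq0; apply/allP => r; rewrite mem_cat => /orP [].
    by case/mapP => i; rewrite mem_filter mem_enum andbT => /hj ? ->.
  by case/nseqP => -> _; rewrite lt0r_neq0 ?dotv_self_gt0.
apply/eqP; rewrite prodf_seq_eq0; apply/hasP; exists (annih (p i)).
  by rewrite mem_cat (map_f (fun i => annih (p i))) ?orTb // mem_filter ij mem_enum.
by rewrite dotv_annih /=; apply/eqP; ring.
Qed.

Lemma veronese_indep m k (p : 'I_k -> 'rV[R]_2) : (k <= m.+1)%N -> (forall i, p i != 0) ->
  (forall i j, i != j -> dotv (annih (p i)) (p j) != 0) ->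
  forall d : 'I_k -> R, \sum_i d i *: veronese m (p i) = 0 -> forall i, d i = 0.
Proof.
move=> km p0 hp d hd j.
have [q [qj qi]] := veronese_annihilator km (p0 j) (fun i ij => hp i j ij).
move/(congr1 (dotv (coefrow m q))): hd.
rewrite (big_morph _ (dotvDr _) (dotv0r _)) dotv0r (bigD1 j) //= big1 => [|i ij].
  rewrite dotvZr dotv_coefrow_veronese addr0 => /eqP.
  by rewrite mulf_eq0 (negbTE qj) orbF => /eqP.
by rewrite dotvZr dotv_coefrow_veronese qi ?mulr0.
Qed.

End Veronese.

(** * Facets *)

Section Facet.
Variables (R : realFieldType) (m : nat) (gens M : seq 'rV[R]_m.+1) (u : 'rV[R]_m.+1).
Hypotheses (hpt : pointed (pcone gens)) (hu : forall x, pcone gens x -> 0 <= dotv u x).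
Hypotheses (hM : forall x, pcone M x <-> pcone gens x /\ dotv u x = 0) (hirr : irredundant M).
Hypothesis hray : forall E, is_extremal_ray (pcone gens) E ->
  exists w : 'rV[R]_2, w != 0 /\ subs E (line (psi m w)).

Lemma irredundant_on_curve a : a \in M ->
  exists cp : R * 'rV[R]_2, [/\ cp.1 != 0, cp.2 != 0 & a = cp.1 *: veronese m cp.2].
Proof.
move=> aM; have a0 := irredundant_neq0 hirr aM.
have [w [w0 hw]] := hray (extremal_ray_irredundant hpt hu hM hirr aM).
have [c ac] : line (psi m w) a by apply: hw; exists 1; rewrite scale1r.
exists (c, annih w); split=> //=; last exact: annih_neq0.
by apply: contraNneq a0 => c0; rewrite ac c0 scale0r.
Qed.

Lemma irredundant_free (T : seq 'rV[R]_m.+1) :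
  uniq T -> {subset T <= M} -> (size T <= m.+1)%N -> free T.
Proof.
move=> uT TM sT; apply/(@freeP _ _ _ (in_tuple T)) => d hd i.
have TiM (j : 'I_(size T)) : T`_j \in M by apply/TM/mem_nth.
have [cp hcp] := fin_all_exists (fun j => irredundant_on_curve (TiM j)).
have c0 j : (cp j).1 != 0 by case: (hcp j).
have p0 j : (cp j).2 != 0 by case: (hcp j).
suff dc j : d j * (cp j).1 = 0.
  by move/eqP: (dc i); rewrite mulf_eq0 (negbTE (c0 i)) orbF => /eqP.
move: j; apply: (veronese_indep sT p0) => [j l jl|].
  apply/negP => /eqP /dotv_annih_eq0 [|mu ejl]; first by case: (hcp j).
  apply: (irredundant_not_parallel (lam := (cp l).1 * mu ^+ m / (cp j).1)
    (pointed_irredundant hpt hM) hirr (TiM l) (TiM j)); first by rewrite nth_uniq // eq_sym.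
  have [_ _ ->] := hcp l; have [cj0 _ ->] := hcp j.
  by rewrite ejl veroneseZ !scalerA divfK.
rewrite -[RHS]hd; apply: eq_bigr => j _; case: (hcp j) => _ _ ->.
by rewrite scalerA.
Qed.

Lemma facet_irredundant_free : span_dim (pcone M) m -> size M = m /\ free M.
Proof.
move=> hdim; have uM := irredundant_uniq hirr.
have sM : size M = m.
  apply/eqP; rewrite eqn_leq; apply/andP; split.
    rewrite leqNgt; apply/negP => mM.
    have fT : free (take m.+1 M).
      by apply: irredundant_free; rewrite ?take_uniq ?size_takel // => x /mem_take.
    have := span_dim_le fT (fun x xT => pcone_mem (mem_take xT)) hdim.
    by rewrite size_takel // ltnn.
  have [s [sm sM fs _]] := hdim; suff : (size s <= size M)%N by rewrite sm.
  rewrite -(eqP fs); apply: leq_trans (dim_span M); apply: dimvS.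
  by apply/span_subvP => x /sM /pcone_span.
by split=> //; apply: irredundant_free => //; rewrite sM leqnSn.
Qed.

End Facet.

Theorem theorem3p5 (R : realType) (m : nat) (hm : (2 <= m)%N)
    (gens : seq 'rV[R]_(m.+1)) :
  full_dim (pcone gens) ->
  pointed (pcone gens) ->
  (forall E, is_extremal_ray (pcone gens) E ->
     exists w : 'rV[R]_2, w != 0 /\ subs E (line (psi m w))) ->
  forall F, is_facet (pcone gens) F ->
    exists s : m.-tuple 'rV[R]_(m.+1),
      [/\ free s,
          (forall i : 'I_m, is_extremal_ray (pcone gens) (ray (tnth s i))
                            /\ subs (ray (tnth s i)) F) &
          (forall E, is_extremal_ray (pcone gens) E -> subs E F ->
             exists i : 'I_m, seteq E (ray (tnth s i)))].
Proof.
move=> hfull hpt hray F [[u [hu hF]] [d [hd hFd]]].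
have [dm] : d.+1 = m.+1 := span_dim_uniq hd hfull; subst d.
have [M [hirr hM]] := face_irredundant_gens hu.
have FM : seteq F (pcone M) by move=> x; rewrite hF hM.
have [/eqP sM fM] := facet_irredundant_free hpt hu hM hirr hray (span_dim_seteq FM hFd).
exists (Tuple sM); split=> // [i|E hE EF].
  have aM : tnth (Tuple sM) i \in M := mem_tnth i (Tuple sM).
  split; first exact: (extremal_ray_irredundant hpt hu hM hirr aM).
  by move=> x [c [c0 ->]]; apply/FM/pconeZ/pcone_mem.
have Mgens a : a \in M -> a != 0 /\ pcone gens a.
  move=> aM; split; first exact: irredundant_neq0 hirr aM.
  exact: ((hM a).1 (pcone_mem aM)).1.
have [a aM Ea] := extremal_ray_of_gens hpt Mgens hE (fun x xE => (FM x).1 (EF x xE)).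
by have [i ai] := tnthP (Tuple sM) a aM; exists i; rewrite -ai.
Qed.
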